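(* There exists a sequence $f_0, f_1, \ldots \in \{0,1\}$ such that for every integer $n = \langle d_0, \ldots, d_s \rangle_2 \geq 2$: (i) if $d_0 = f_0, \ldots, d_s = f_s$, then $\nu_2(H(n,2)) \geq 1 - s$; (ii) if $d_0 = f_0, \ldots, d_{r-1} = f_{r-1}$ and $d_r \neq f_r$ for some positive integer $r \leq s$, then $\nu_2(H(n,2)) = r - 2s$. Precisely, the sequence is determined recursively by $f_0 = 1$ and, for every positive integer $s$, $f_s = 1$ if $\nu_2(H(\langle f_0, \ldots, f_{s-1}, 1 \rangle_2, 2)) \geq 1 - s$, and $f_s = 0$ otherwise. In particular, $f_0 = 1$, $f_1 = 1$, $f_2 = 0$.
   Context: For integers $n \geq k \geq 1$, $H(n,k) := \sum_{1 \leq i_1 < \cdots < i_k \leq n} \frac{1}{i_1 \cdots i_k}$. $\nu_2$ denotes the $2$-adic valuation on the rationals. The notation $\langle a_0, \ldots, a_v \rangle_2 := \sum_{i=0}^v a_i 2^{v-i}$ denotes a binary representation, with $a_i \in \{0,1\}$ and $a_0 = 1$. *)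

From mathcomp Require Import all_boot all_order all_algebra.
Set Implicit Arguments. Unset Strict Implicit. Unset Printing Implicit Defensive.
Import Order.TTheory GRing.Theory Num.Theory.
Local Open Scope ring_scope.

(* H(n,k) = sum over 1 <= i_1 < ... < i_k <= n of 1/(i_1 ... i_k), in rat.
   A k-subset S of 'I_n encodes {i+1 | i in S}. *)
Definition H (n k : nat) : rat :=
  \sum_(S : {set 'I_n} | #|S| == k) \prod_(i in S) ((i.+1)%:R)^-1.

(* 2-adic valuation of a rational: nu2(a/b) = v2(a) - v2(b); nu2 0 := 0
   (convention irrelevant here since H(n,2) > 0 for n >= 2). *)
Definition nu2 (q : rat) : int :=
  ((logn 2 `|numq q|%N)%:Z - (logn 2 `|denq q|%N)%:Z)%R.

Definition binval (v : nat) (a : nat -> bool) : nat :=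
  (\sum_(i < v.+1) (a i : nat) * 2 ^ (v - i))%N.

(* Let Z_(2) be the rationals with odd denominator. Since 2 H(n,2) = H_1(n)^2 - H_2(n)
   with H_e(n) = sum_(i <= n) i^-e, the number E_s(n) = 2^(2s+1) H(n,2) equals
   (2^s H_1(n))^2 - 4^s H_2(n). The terms of even index of H_e(N) add up to
   H_e(N/2) / 2^e, so 2^(e(s+1)) H_e(N) = 2^(es) H_e(N/2) mod 2^(e(s+1)) Z_(2).
   For n = <d_0, ..., d_s>_2 this makes 2^s H_1(n) odd and gives
   E_s(n) = E_k(<d_0, ..., d_k>_2) mod 2^(k+2) for k <= s, while flipping the last
   digit of n changes E_s(n) by 2^(s+1) times a unit. Hence the greedy digits f_s are
   exactly those keeping E_s(<f_0, ..., f_s>_2) = 0 mod 2^(s+2), which is (i), and a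
   first deviation at position r makes E_r, hence E_s, equal to 2^(r+1) times a unit
   mod 2^(r+2), which is (ii). *)

From mathcomp Require Import all_boot all_order all_algebra.
From mathcomp Require Import ring zify.
Import Order.TTheory GRing.Theory Num.Theory.
Set Implicit Arguments. Unset Strict Implicit. Unset Printing Implicit Defensive.
Local Open Scope ring_scope.

Definition Z2 (x : rat) : Prop :=
  exists (a : int) (b : nat), odd b /\ x = a%:~R / b%:R.

Definition Z2dvd (k : nat) (x : rat) : Prop := exists2 c, Z2 c & x = 2%:R ^+ k * c.

Definition Z2odd (x : rat) : Prop := Z2dvd 1 (x - 1).

Lemma natr_odd_neq0 (b : nat) : odd b -> (b%:R : rat) != 0.
Proof. by rewrite pnatr_eq0; case: b. Qed.

Lemma natr_odd (b : nat) : odd b -> (b%:R : rat) = (b./2)%:R * 2 + 1.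
Proof. by move=> hb; rewrite -{1}(odd_double_half b) hb natrD -muln2 natrM addrC. Qed.

Lemma Z2_int (a : int) : Z2 a%:~R.
Proof. by exists a, 1%N; rewrite divr1. Qed.

Lemma Z2_nat (n : nat) : Z2 n%:R.
Proof. exact: (Z2_int n). Qed.

Lemma Z2D x y : Z2 x -> Z2 y -> Z2 (x + y).
Proof.
move=> [a [b [hb ->]]] [a' [b' [hb' ->]]].
exists (a * b' + a' * b), (b * b')%N; split; first by rewrite oddM hb hb'.
rewrite natrM rmorphD !rmorphM /= !pmulrn.
by field; rewrite !natr_odd_neq0.
Qed.

Lemma Z2M x y : Z2 x -> Z2 y -> Z2 (x * y).
Proof.
move=> [a [b [hb ->]]] [a' [b' [hb' ->]]].
exists (a * a'), (b * b')%N; split; first by rewrite oddM hb hb'.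
by rewrite natrM rmorphM /= invfM mulrACA.
Qed.

Lemma Z2N x : Z2 x -> Z2 (- x).
Proof. by move=> /(Z2M (Z2_int (-1))); rewrite rmorphN /= mulN1r. Qed.

Lemma Z2_invn (b : nat) : odd b -> Z2 (b%:R)^-1.
Proof. by move=> hb; exists 1, b; rewrite div1r. Qed.

Lemma Z2dvd0 k : Z2dvd k 0.
Proof. by exists 0; [exact: (Z2_int 0) | rewrite mulr0]. Qed.

Lemma Z2dvd_mul2X k x : Z2 x -> Z2dvd k (2%:R ^+ k * x).
Proof. by exists x. Qed.

Lemma Z2dvd_2X k : Z2dvd k (2%:R ^+ k).
Proof. by exists 1; [exact: (Z2_int 1) | rewrite mulr1]. Qed.

Lemma Z2dvdD k x y : Z2dvd k x -> Z2dvd k y -> Z2dvd k (x + y).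
Proof. by move=> [c hc ->] [c' hc' ->]; exists (c + c'); [exact: Z2D | rewrite mulrDr]. Qed.

Lemma Z2dvdN k x : Z2dvd k x -> Z2dvd k (- x).
Proof. by move=> [c hc ->]; exists (- c); [exact: Z2N | rewrite mulrN]. Qed.

Lemma Z2dvdB k x y : Z2dvd k x -> Z2dvd k y -> Z2dvd k (x - y).
Proof. by move=> hx /Z2dvdN; apply: Z2dvdD. Qed.

Lemma Z2dvdM k m x y : Z2dvd k x -> Z2dvd m y -> Z2dvd (k + m) (x * y).
Proof.
by move=> [c hc ->] [c' hc' ->]; exists (c * c'); [exact: Z2M | rewrite exprD mulrACA].
Qed.

Lemma Z2dvdW m k x : (m <= k)%N -> Z2dvd k x -> Z2dvd m x.
Proof.
move=> hmk [c hc ->]; exists (2%:R ^+ (k - m) * c).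
  by apply: Z2M => //; rewrite -natrX; apply: Z2_nat.
by rewrite mulrA -exprD subnKC.
Qed.

Lemma Z2oddM x y : Z2odd x -> Z2odd y -> Z2odd (x * y).
Proof.
move=> hx hy; rewrite /Z2odd.
have -> : x * y - 1 = (x - 1) * (y - 1) + (x - 1) + (y - 1) by ring.
have hxy : Z2dvd 1 ((x - 1) * (y - 1)) by apply: Z2dvdW (Z2dvdM hx hy).
exact: Z2dvdD (Z2dvdD hxy hx) hy.
Qed.

Lemma Z2odd_invn (b : nat) : odd b -> Z2odd (b%:R)^-1.
Proof.
move=> hb; have hbR := natr_odd hb.
exists (- (b./2)%:R / b%:R); first by apply: Z2M; [apply: Z2N; apply: Z2_nat | apply: Z2_invn].
by rewrite hbR; field; rewrite -hbR natr_odd_neq0.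
Qed.

Lemma Z2dvd_split k x : Z2dvd k x -> Z2dvd k.+1 x \/ Z2dvd k.+1 (x - 2%:R ^+ k).
Proof.
move=> [_ [a [b [hb ->]]] ->].
have hbR := natr_odd hb.
have [q [r [-> r01]]] : exists q r, a = q * 2 + r /\ (r = 0 \/ r = 1).
  by exists (a %/ 2)%Z, (a %% 2)%Z; split; [exact: divz_eq | lia].
case: r01 => ->; [left | right].
  exists (q%:~R / b%:R); first by exists q, b.
  by rewrite addr0 rmorphM /= exprS; field; rewrite natr_odd_neq0.
exists ((q - (b./2)%:Z)%:~R / b%:R); first by exists (q - (b./2)%:Z), b.
rewrite rmorphD rmorphM rmorphB /= -pmulrn rmorph1 (_ : 2%:~R = 2) // exprS hbR.
by field; rewrite -hbR natr_odd_neq0.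
Qed.

Lemma nu2_frac (a : int) (b : nat) : a != 0 -> (0 < b)%N ->
  nu2 (a%:~R / b%:R) = (logn 2 `|a|)%:Z - (logn 2 b)%:Z.
Proof.
move=> a0 b0; set q := a%:~R / b%:R.
have q0 : q != 0 by rewrite mulf_neq0 ?invr_eq0 ?intr_eq0 ?pnatr_eq0 -?lt0n.
have e : (numq q * b%:Z) = a * denq q.
  apply: (@intr_inj rat); rewrite !rmorphM /= numqE /q.
  by field; rewrite pnatr_eq0 -lt0n.
have := congr1 (fun z : int => logn 2 `|z|) e.
rewrite /= !abszM !lognM ?absz_gt0 ?numq_eq0 ?denq_neq0 ?lt0n_neq0 //=.
by rewrite /nu2; lia.
Qed.

Lemma nu2_scaled (h : rat) (m k : nat) (a : int) (b : nat) : a != 0 -> odd b ->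
  2%:R ^+ m * h = 2%:R ^+ k * (a%:~R / b%:R) -> nu2 h = (k + logn 2 `|a|)%:Z - m%:Z.
Proof.
move=> a0 hb e.
have b0 : (0 < b)%N by case: b hb {e}.
have -> : h = ((2 ^ k)%:Z * a)%:~R / (b * 2 ^ m)%:R.
  apply: (@mulfI _ (2%:R ^+ m)); first by rewrite expf_neq0 ?pnatr_eq0.
  by rewrite e rmorphM /= -pmulrn natrM !natrX; field; rewrite natr_odd_neq0 ?expf_neq0.
have n0 : (2 ^ k)%:Z * a != 0 by rewrite mulf_neq0 // eqz_nat -lt0n expn_gt0.
rewrite nu2_frac // ?muln_gt0 ?b0 ?expn_gt0 //.
rewrite abszM /= !lognM ?expn_gt0 ?absz_gt0 // !pfactorK //.
by rewrite (@logn_coprime 2 b) ?addn0 // coprime_sym coprimen2.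
Qed.

Lemma nu2_ge m k h : Z2dvd k (2%:R ^+ m * h) -> h = 0 \/ k%:Z - m%:Z <= nu2 h.
Proof.
move=> [_ [a [b [hb ->]]] e]; have [a0|a0] := eqVneq a 0.
  left; apply/eqP; move: e; rewrite a0 mul0r mulr0 => /eqP.
  by rewrite mulf_eq0 expf_eq0 pnatr_eq0 andbF.
by right; rewrite (nu2_scaled a0 hb e); lia.
Qed.

Lemma nu2_eq m k h : Z2dvd k.+1 (2%:R ^+ m * h - 2%:R ^+ k) -> nu2 h = k%:Z - m%:Z.
Proof.
move=> [_ [a [b [hb ->]]] /eqP]; rewrite subr_eq => /eqP e.
have hn : odd `|b%:Z + 2 * a|.
  by move: hb; rewrite -[odd b]negbK -[odd `|_|]negbK -!dvdn2; lia.
have n0 : b%:Z + 2 * a != 0 by apply: contraTneq hn => ->.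
rewrite (@nu2_scaled _ m k _ b n0 hb); last first.
  rewrite e rmorphD rmorphM /= -pmulrn (_ : 2%:~R = 2) // exprS.
  by field; rewrite natr_odd_neq0.
by rewrite (@logn_coprime 2 _) ?addn0 // coprime_sym coprimen2.
Qed.

Section TwoSubsets.
Variables (R : comRingType) (T : finType) (w : T -> R).

Lemma prod_card2 (S : {set T}) : #|S| == 2 ->
  (\prod_(i in S) w i) *+ 2 = \sum_(i in S) \sum_(j in S | j != i) w i * w j.
Proof.
case/cards2P=> x [y [hxy ->]].
have hy : x \notin [set y] by rewrite inE.
rewrite big_setU1 //= big_set1 big_setU1 //= big_set1.
rewrite !big_mkcondr !big_setU1 //= !big_set1.
by rewrite !eqxx [y == x]eq_sym hxy /= add0r addr0 mulr2n [w y * _]mulrC.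
Qed.

Lemma set2_card2 (S : {set T}) (i j : T) : j != i ->
  [&& #|S| == 2, i \in S & j \in S] = (S == [set i; j]).
Proof.
move=> hji; have hij : i != j by rewrite eq_sym.
apply/and3P/eqP => [[/eqP hS hi hj] | ->].
  apply/eqP; rewrite eq_sym eqEcard hS cards2 hij andbT.
  by apply/subsetP=> x; rewrite !inE => /orP[]/eqP->.
by rewrite cards2 hij !inE !eqxx orbT.
Qed.

Lemma sum_prod_card2 :
  (\sum_(S : {set T} | #|S| == 2) \prod_(i in S) w i) *+ 2
    = (\sum_i w i) ^+ 2 - \sum_i w i ^+ 2.
Proof.
pose G (S : {set T}) i j :=
  if [&& #|S| == 2, i \in S, j \in S & j != i] then w i * w j else 0.
transitivity (\sum_S \sum_i \sum_j G S i j).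
  rewrite -sumrMnl big_mkcond; apply: eq_bigr => S _.
  have [hS|hS] := boolP (#|S| == 2); last first.
    by rewrite big1 // => i _; rewrite big1 // => j _; rewrite /G (negbTE hS).
  rewrite prod_card2 // big_mkcond; apply: eq_bigr => i _.
  have [hi|hi] := boolP (i \in S); last by rewrite big1 // => j _; rewrite /G hS (negbTE hi).
  by rewrite big_mkcond; apply: eq_bigr => j _; rewrite /G hS hi.
rewrite exchange_big expr2 mulr_suml -sumrB; apply: eq_bigr => i _.
rewrite exchange_big mulr_sumr (bigD1 i) //= [X in _ = X - _](bigD1 i) //=.
rewrite -expr2 addrAC subrr add0r.
rewrite big1 ?add0r => [|S _]; last by rewrite /G eqxx !andbF.
apply: eq_bigr => j hj.
rewrite (eq_bigr (fun S => if S == [set i; j] then w i * w j else 0)).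
  by rewrite -big_mkcond big_pred1_eq.
by move=> S _; rewrite /G hj andbT -set2_card2 // -andbA.
Qed.

End TwoSubsets.

Definition Hpow (e n : nat) : rat := \sum_(i < n) ((i.+1)%:R ^+ e)^-1.

Lemma HpowS e n : Hpow e n.+1 = Hpow e n + (n.+1%:R ^+ e)^-1.
Proof. by rewrite /Hpow big_ord_recr. Qed.

Lemma H2_Hpow n : H n 2 = (Hpow 1 n ^+ 2 - Hpow 2 n) / 2.
Proof.
have := sum_prod_card2 (fun i : 'I_n => ((i.+1)%:R : rat)^-1).
rewrite /Hpow (eq_bigr _ (fun i _ => exprVn _ 2)) (eq_bigr _ (fun i _ => expr1 _)).
by rewrite -mulr_natr => <-; rewrite mulfK.
Qed.

Lemma Hpow_half e N : Z2 (Hpow e N - Hpow e N./2 / 2%:R ^+ e).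
Proof.
elim: N => [|N IH]; first by rewrite /Hpow !big_ord0 mul0r subr0; apply: (Z2_nat 0).
rewrite HpowS (_ : N.+1./2 = uphalf N) // uphalf_half.
have [hN|hN] := boolP (odd N); last first.
  rewrite add0n addrAC; apply: Z2D => //.
  by rewrite -natrX; apply: Z2_invn; rewrite oddX /= hN orbT.
have hN2 : N.+1 = ((N./2).+1 * 2)%N.
  by rewrite -{1}(odd_double_half N) hN muln2 doubleS.
rewrite add1n HpowS {1}hN2 natrM exprMn.
suff -> : ((N./2).+1%:R ^+ e * 2%:R ^+ e)^-1 = ((N./2).+1%:R ^+ e)^-1 / 2%:R ^+ e :> rat.
  by rewrite mulrDl opprD addrACA subrr addr0.
by rewrite invfM.
Qed.

Definition scaledHpow (e s n : nat) : rat := 2%:R ^+ (e * s) * Hpow e n.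

Definition scaledH (s n : nat) : rat := scaledHpow 1 s n ^+ 2 - scaledHpow 2 s n.

Lemma scaledH_H s n : scaledH s n = 2%:R ^+ (2 * s).+1 * H n 2.
Proof. by rewrite /scaledH /scaledHpow H2_Hpow mul1n [in RHS]exprS mulnC exprM; field. Qed.

Lemma scaledHpow_half e s N :
  Z2dvd (e * s.+1) (scaledHpow e s.+1 N - scaledHpow e s N./2).
Proof.
have -> : scaledHpow e s.+1 N - scaledHpow e s N./2
          = 2%:R ^+ (e * s.+1) * (Hpow e N - Hpow e N./2 / 2%:R ^+ e).
  by rewrite /scaledHpow mulnS exprD; field; rewrite expf_neq0 ?pnatr_eq0.
exact/Z2dvd_mul2X/Hpow_half.
Qed.

Lemma scaledH_half k N :
  Z2odd (scaledHpow 1 k.+1 N) -> Z2odd (scaledHpow 1 k N./2) ->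
  Z2dvd k.+2 (scaledH k.+1 N - scaledH k N./2).
Proof.
set x := scaledHpow 1 k.+1 N; set x' := scaledHpow 1 k N./2 => hx hx'.
have -> : scaledH k.+1 N - scaledH k N./2
          = (x - x') * ((x - 1) + (x' - 1) + 2%:R ^+ 1)
            - (scaledHpow 2 k.+1 N - scaledHpow 2 k N./2) by rewrite /scaledH -/x -/x'; ring.
apply: Z2dvdB.
  rewrite -addn1; apply: Z2dvdM; first by have := scaledHpow_half 1 k N; rewrite mul1n.
  by apply: Z2dvdD; [apply: Z2dvdD | apply: Z2dvd_2X].
by apply: Z2dvdW (scaledHpow_half 2 k N); lia.
Qed.

Lemma binval0 d : binval 0 d = d 0%N.
Proof. by rewrite /binval big_ord_recr big_ord0 /= subnn muln1. Qed.

Lemma binvalS k d : binval k.+1 d = ((binval k d).*2 + d k.+1)%N.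
Proof.
rewrite /binval big_ord_recr /= subnn muln1 -mul2n big_distrr /=; congr (_ + _)%N.
by apply: eq_bigr => i _; rewrite subSn ?expnS 1?mulnCA // -ltnS.
Qed.

Lemma binval_half k d : (binval k.+1 d)./2 = binval k d.
Proof. by rewrite binvalS addnC half_bit_double. Qed.

Lemma eq_binval k d d' : (forall i, (i <= k)%N -> d i = d' i) -> binval k d = binval k d'.
Proof. by move=> dd'; apply: eq_bigr => i _; rewrite dd' // -ltnS. Qed.

Lemma scaledH1_odd k (d : nat -> bool) : d 0%N -> Z2odd (scaledHpow 1 k (binval k d)).
Proof.
move=> d0; elim: k => [|k IH].
  rewrite binval0 d0 /scaledHpow /Hpow big_ord1 /= !expr1 invr1 mulr1 /Z2odd subrr.
  exact: Z2dvd0.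
have -> : scaledHpow 1 k.+1 (binval k.+1 d) = scaledHpow 1 k (binval k d)
          + (scaledHpow 1 k.+1 (binval k.+1 d) - scaledHpow 1 k (binval k.+1 d)./2).
  by rewrite binval_half addrC subrK.
rewrite /Z2odd addrAC; apply: Z2dvdD => //.
by apply: Z2dvdW (scaledHpow_half 1 k _); rewrite mul1n.
Qed.

Lemma scaledH_prefix k s (d : nat -> bool) : d 0%N -> (k <= s)%N ->
  Z2dvd k.+2 (scaledH s (binval s d) - scaledH k (binval k d)).
Proof.
move=> d0; elim: s => [|s IH]; first by rewrite leqn0 => /eqP ->; rewrite subrr; apply: Z2dvd0.
rewrite leq_eqVlt ltnS => /orP[/eqP <-|hks]; first by rewrite subrr; apply: Z2dvd0.
have -> : scaledH s.+1 (binval s.+1 d) - scaledH k (binval k d)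
          = (scaledH s.+1 (binval s.+1 d) - scaledH s (binval s.+1 d)./2)
            + (scaledH s (binval s d) - scaledH k (binval k d)).
  by rewrite binval_half addrA subrK.
have hs : Z2dvd s.+2 (scaledH s.+1 (binval s.+1 d) - scaledH s (binval s.+1 d)./2).
  by apply: scaledH_half; rewrite ?binval_half; apply: scaledH1_odd.
by apply: Z2dvdD (IH hks); apply: Z2dvdW hs; rewrite !ltnS.
Qed.

Lemma scaledH_flip j Q (b : bool) : Z2odd (scaledHpow 1 j Q.*2) ->
  Z2dvd j.+2 (scaledH j (Q.*2 + b) - scaledH j (Q.*2 + ~~ b) - 2%:R ^+ j.+1).
Proof.
set x := scaledHpow 1 j Q.*2 => hx.
have hQ : odd (Q.*2).+1 by rewrite /= odd_double.
have hstep : scaledH j (Q.*2).+1 - scaledH j Q.*2 = 2%:R ^+ j.+1 * (x / (Q.*2).+1%:R).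
  rewrite /scaledH /scaledHpow -/x !HpowS /x /scaledHpow.
  by rewrite [in RHS]exprS !mul1n mulnC exprM; field; rewrite nat1r natr_odd_neq0.
have hone : Z2dvd j.+2 (scaledH j (Q.*2).+1 - scaledH j Q.*2 - 2%:R ^+ j.+1).
  rewrite hstep -[X in _ - X]mulr1 -mulrBr -(addn1 j.+1).
  by apply: Z2dvdM; [apply: Z2dvd_2X | apply: Z2oddM hx (Z2odd_invn hQ)].
case: b; rewrite /= ?addn1 ?addn0 //.
have -> : scaledH j Q.*2 - scaledH j (Q.*2).+1 - 2%:R ^+ j.+1
          = - (scaledH j (Q.*2).+1 - scaledH j Q.*2 - 2%:R ^+ j.+1) - 2%:R ^+ j.+2.
  by rewrite (exprS _ j.+1); ring.
by apply: Z2dvdB; [apply: Z2dvdN | apply: Z2dvd_2X].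
Qed.

Definition fcond (s n : nat) : bool := 1 - s%:Z <= nu2 (H n 2).

(* [fnum s] is <f_0, ..., f_s>_2 and [fbit s] is f_s. *)
Fixpoint fnum (s : nat) : nat :=
  if s is s'.+1 then ((fnum s').*2 + fcond s (fnum s').*2.+1)%N else 1%N.

Definition fbit (s : nat) : bool := odd (fnum s).

Lemma fcond_Z2dvd s n : (0 < s)%N -> Z2dvd s.+2 (scaledH s n) -> fcond s n.
Proof.
move=> s0; rewrite scaledH_H /fcond => /nu2_ge[->|]; last by lia.
by rewrite (_ : nu2 0 = 0) //; lia.
Qed.

Lemma fcond_exact s n : Z2dvd s.+2 (scaledH s n - 2%:R ^+ s.+1) -> ~~ fcond s n.
Proof. by rewrite scaledH_H /fcond => /nu2_eq ->; lia. Qed.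

Lemma fbitS s : fbit s.+1 = fcond s.+1 (fnum s).*2.+1.
Proof. by rewrite /fbit /= oddD odd_double; case: fcond. Qed.

Lemma fnumS s : fnum s.+1 = ((fnum s).*2 + fbit s.+1)%N.
Proof. by rewrite fbitS. Qed.

Lemma binval_prefix k d : (forall i, (i <= k)%N -> d i = fbit i) -> binval k d = fnum k.
Proof.
move/eq_binval->; elim: k => [|k IH]; first by rewrite binval0.
by rewrite binvalS IH fnumS.
Qed.

Lemma binval_fbit_ext s (b : bool) :
  binval s.+1 (fun i => if (i <= s)%N then fbit i else b) = ((fnum s).*2 + b)%N.
Proof. by rewrite binvalS ltnn (@binval_prefix s) // => i ->. Qed.

Lemma scaledH1_fnum_double s : Z2odd (scaledHpow 1 s.+1 (fnum s).*2).
Proof. by rewrite -[(fnum s).*2]addn0 -(binval_fbit_ext s false); apply: scaledH1_odd. Qed.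

Lemma scaledH_fnum s : Z2dvd s.+2 (scaledH s (fnum s)).
Proof.
elim: s => [|s IH].
  rewrite /scaledH /scaledHpow /Hpow !big_ord1 /= !muln0 expr0 !mul1r.
  by rewrite expr1 invr1 (expr1n rat) subrr; apply: Z2dvd0.
set P := fnum s.
have hstep (b : bool) : Z2dvd s.+2 (scaledH s.+1 (P.*2 + b)).
  have := scaledH_prefix (d := fun i => if (i <= s)%N then fbit i else b) isT (leqnSn s).
  rewrite binval_fbit_ext (@binval_prefix s) => [h|i ->] //.
  by rewrite -(subrK (scaledH s P) (scaledH _ _)); apply: Z2dvdD.
rewrite /= -/P; case/Z2dvd_split: (hstep true); rewrite addn1 => hodd.
  by rewrite fcond_Z2dvd // addn1.
rewrite (negbTE (fcond_exact hodd)) addn0.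
have := scaledH_flip false (scaledH1_fnum_double s); rewrite /= addn0 addn1 => hflip.
have -> : scaledH s.+1 P.*2 = (scaledH s.+1 P.*2 - scaledH s.+1 P.*2.+1 - 2%:R ^+ s.+2)
                              + (scaledH s.+1 P.*2.+1 - 2%:R ^+ s.+2) + 2%:R ^+ s.+3.
  by rewrite (exprS _ s.+2); ring.
by apply: Z2dvdD; [apply: Z2dvdD | apply: Z2dvd_2X].
Qed.

Lemma fbit_rec s : (0 < s)%N ->
  fbit s = fcond s (binval s (fun i => if (i < s)%N then fbit i else true)).
Proof.
case: s => // s _; rewrite fbitS binvalS ltnn (@binval_prefix s) ?addn1 // => i hi.
by rewrite ltnS hi.
Qed.

Lemma fbit1 : fbit 1 = true.
Proof.
have H3 : H 3 2 = 1 by rewrite H2_Hpow /Hpow !big_ord_recr !big_ord0 /=; field.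
by rewrite fbitS /fcond /= H3.
Qed.

Lemma fbit2 : fbit 2 = false.
Proof.
have H7 : H 7 2 = 469%:Q / 180%:Q by rewrite H2_Hpow /Hpow !big_ord_recr !big_ord0 /=; field.
by rewrite fbitS /= -[fcond 1 3]fbitS fbit1 /fcond H7.
Qed.

Lemma nu2_H_fprefix s d : (2 <= binval s d)%N -> (forall i, (i <= s)%N -> d i = fbit i) ->
  1 - s%:Z <= nu2 (H (binval s d) 2).
Proof.
move=> d2 /binval_prefix eq_d; rewrite eq_d in d2 *.
have s0 : (0 < s)%N by case: s d2 {eq_d}.
exact/fcond_Z2dvd/scaledH_fnum.
Qed.

Lemma nu2_H_fdeviate s r (d : nat -> bool) : d 0%N -> (0 < r)%N -> (r <= s)%N ->
  (forall i, (i < r)%N -> d i = fbit i) -> d r <> fbit r ->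
  nu2 (H (binval s d) 2) = r%:Z - (2 * s)%N%:Z.
Proof.
move=> d0; case: r => // r _ hrs hd /eqP hr.
have eP : binval r d = fnum r by apply: binval_prefix => i hi; rewrite hd.
have hflip := scaledH_flip (d r.+1) (scaledH1_fnum_double r).
have hf := scaledH_fnum r.+1; rewrite fnumS in hf.
rewrite (_ : ~~ d r.+1 = fbit r.+1) in hflip; last by case: (d _) (fbit _) hr => [] [].
have hprefix := scaledH_prefix d0 hrs; rewrite binvalS eP in hprefix.
set x := scaledH r.+1 _ in hflip hprefix; set y := scaledH r.+1 _ in hflip hf.
have hs : Z2dvd r.+3 (scaledH s (binval s d) - 2%:R ^+ r.+2).
  have -> : scaledH s (binval s d) - 2%:R ^+ r.+2
            = (scaledH s (binval s d) - x) + (x - y - 2%:R ^+ r.+2) + y by ring.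
  by apply: Z2dvdD => //; apply: Z2dvdD.
by move: hs; rewrite scaledH_H => /nu2_eq ->; lia.
Qed.

Local Close Scope ring_scope.

Theorem corollary2p1 :
  exists f : nat -> bool,
    (* recursive determination *)
    f 0%N = true /\
    (forall s : nat, (0 < s)%N ->
       f s = ((1 - (s%:Z))%R <= nu2 (H (binval s (fun i => if (i < s)%N then f i else true)) 2))%R) /\
    (* properties (i) and (ii) *)
    (forall (s : nat) (d : nat -> bool), d 0%N = true -> (2 <= binval s d)%N ->
       ((forall i, (i <= s)%N -> d i = f i) ->
          ((1 - (s%:Z))%R <= nu2 (H (binval s d) 2))%R) /\
       (forall r : nat, (0 < r)%N -> (r <= s)%N ->
          (forall i, (i < r)%N -> d i = f i) -> d r <> f r ->
          nu2 (H (binval s d) 2) = (r%:Z - (2 * s)%N%:Z)%R)) /\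
    (* in particular *)
    f 0%N = true /\ f 1%N = true /\ f 2%N = false.
Proof.
exists fbit; split=> //; split; first exact: fbit_rec.
split; last by rewrite fbit1 fbit2.
move=> s d d0 d2; split; first exact: nu2_H_fprefix.
by move=> r r0 hrs hd hr; apply: nu2_H_fdeviate.
Qed.
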